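(* Consider the finite-dimensional problem (P) described in the context. (1) If additionally $\mathbf{x}^\downarrow=0$ is imposed, then (P) reduces to a mixed-integer linear program: all its constraints become mixed-integer linear. (2) Problem (P) reduces to a linear program, in which the constraints can be equivalently expressed as linear constraints in continuous variables only, in each of the following cases: $\mathbf{x}^0\le0$ is additionally imposed; or $K=1$; or $\eta^{c}=\eta^{d}=1$.
   Context: Let $K$ be a positive integer, $\Delta t>0$, $T=K\Delta t$, $\mathcal{K}=\{1,\dots,K\}$, $0\le\underline y\le\bar y$, $\underline x\le0\le\bar x$, efficiencies $\eta^{c},\eta^{d}\in(0,1]$, $\Delta\eta=1/\eta^{d}-\eta^{c}$, $y_0\ge0$ and $\gamma\in[0,T]$. Let $c$ and $\phi$ be real-valued cost functions. Problem (P) minimizes $c(\mathbf{x}^0,\mathbf{x}^\uparrow,\mathbf{x}^\downarrow)+\phi(\mathbf{x}^0,\mathbf{x}^\uparrow,\mathbf{x}^\downarrow,y_0)$. Its variables are $\mathbf{x}^0\in\mathbb{R}^K$; $\mathbf{x}^\uparrow,\mathbf{x}^\downarrow\in\mathbb{R}^K_+$; $\boldsymbol\alpha,\boldsymbol\beta\in\mathbb{R}^K$; $\underline{\boldsymbol\lambda},\bar{\boldsymbol\lambda}\in\mathbb{R}^K_+$; $\underline{\boldsymbol\Lambda}_k\in\mathbb{R}^k_+$ and $\bar{\boldsymbol\Lambda}_k\in\mathbb{R}^k$ for $k\in\mathcal{K}$; and $\upsilon_{1k},\upsilon_{2k}\in\{0,1\}$ for $k\le K-1$. Its constraints are: (a)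 $x^0_k+x^\uparrow_k\le\bar x$ and $x^0_k-x^\downarrow_k\ge\underline x$; (b) $y_0-\gamma\underline\lambda_k-\Delta t\sum_{l\le k}(\alpha_l+\underline\Lambda_{kl})\ge\underline y$; (c) $\alpha_k\ge\eta^{c}x^0_k$, $\alpha_k\ge x^0_k/\eta^{d}$, $\beta_k\ge\eta^{c}(x^0_k+x^\uparrow_k)$ and $\beta_k\ge(x^0_k+x^\uparrow_k)/\eta^{d}$; (d) $\underline\Lambda_{kl}+\underline\lambda_k+\alpha_l-\beta_l\ge0$ for $l\le k$; (e) $y_0+\gamma\bar\lambda_k+\Delta t\sum_{l\le k}\bar\Lambda_{kl}\le\bar y$; (f) $\bar\Lambda_{kk}\ge-\eta^{c}x^0_k$, $\bar\Lambda_{kk}\ge\eta^{c}(x^\downarrow_k-x^0_k)-\bar\lambda_k$ and $\bar\Lambda_{kk}\ge0$; (g) for $k\le K-1$: $(1-\upsilon_{1k})\underline x\le x^0_k-x^\downarrow_k\le\upsilon_{1k}\bar x$ and $\upsilon_{2k}\underline x\le x^0_k\le(1-\upsilon_{2k})\bar x$; (h) for $l<k$: - $\bar\Lambda_{kl}\ge\frac{x^\downarrow_l-x^0_l}{\eta^{d}}-\bar\lambda_k+(1-\upsilon_{1l})\Delta\eta\,\underline x$, - $\bar\Lambda_{kl}\ge-\frac{x^0_l}{\eta^{d}}+\upsilon_{2l}\Delta\eta\,\underline x$, - $\bar\Lambda_{kl}\ge\eta^{c}(x^\downarrow_l-x^0_l)-\bar\lambda_k-\upsilon_{1l}\Delta\eta\,\bar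 x$, - $\bar\Lambda_{kl}\ge-\eta^{c}x^0_l-(1-\upsilon_{2l})\Delta\eta\,\bar x$; (i) for $l<k$: the bilinear constraint $\bar\Lambda_{kl}x^\downarrow_l+\bar\lambda_kx^0_l\ge\upsilon_{2l}\frac{\underline x(\bar x-\underline x)}{\eta^{d}}-\upsilon_{1l}\frac{\bar x^2}{4\eta^{d}}$. All unqualified indices range over $\mathcal{K}$. *)

From HB Require Import structures.
From mathcomp Require Import all_boot all_order all_algebra.
From mathcomp Require Import reals.
Set Implicit Arguments. Unset Strict Implicit. Unset Printing Implicit Defensive.
Import Order.TTheory GRing.Theory Num.Theory.
Local Open Scope ring_scope.

(* Indices k in {1..K} are represented 0-based by k : 'I_K.
   For k : 'I_K the vectors Lambda_k in R^k are represented as the row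
   (fun l => Lam k l) restricted to l <= k (entries l > k are unused).
   The binaries upsilon_{1k}, upsilon_{2k} (k <= K-1, i.e. 0-based k.+1 < K)
   are booleans u1 k, u2 k, used as reals via (u%:R). *)

Section P.
Variable R : realType.

Definition deta (etac etad : R) : R := etad^-1 - etac.

Definition feasP (K : nat) (dt ylo yhi xlo xhi etac etad y0 gamma : R)
  (x0 xu xd alpha beta laml lamu : 'I_K -> R)
  (Laml Lamu : 'I_K -> 'I_K -> R) (u1 u2 : 'I_K -> bool) : Prop :=
  let de := deta etac etad in
  (forall k, 0 <= xu k /\ 0 <= xd k /\ 0 <= laml k /\ 0 <= lamu k) /\
  (forall k l : 'I_K, (l <= k)%N -> 0 <= Laml k l) /\
  (forall k, x0 k + xu k <= xhi /\ xlo <= x0 k - xd k) /\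
  (forall k : 'I_K,
     ylo <= y0 - gamma * laml k
             - dt * \sum_(l < K | (l <= k)%N) (alpha l + Laml k l)) /\
  (forall k, etac * x0 k <= alpha k /\ x0 k / etad <= alpha k /\
             etac * (x0 k + xu k) <= beta k /\
             (x0 k + xu k) / etad <= beta k) /\
  (forall k l : 'I_K, (l <= k)%N -> 0 <= Laml k l + laml k + alpha l - beta l) /\
  (forall k : 'I_K,
     y0 + gamma * lamu k + dt * \sum_(l < K | (l <= k)%N) Lamu k l <= yhi) /\
  (forall k, - (etac * x0 k) <= Lamu k k /\
             etac * (xd k - x0 k) - lamu k <= Lamu k k /\ 0 <= Lamu k k) /\
  (forall k : 'I_K, (k.+1 < K)%N ->
     (1 - (u1 k)%:R) * xlo <= x0 k - xd k /\ x0 k - xd k <= (u1 k)%:R * xhi /\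
     (u2 k)%:R * xlo <= x0 k /\ x0 k <= (1 - (u2 k)%:R) * xhi) /\
  (forall k l : 'I_K, (l < k)%N ->
     (xd l - x0 l) / etad - lamu k + (1 - (u1 l)%:R) * de * xlo <= Lamu k l /\
     - (x0 l / etad) + (u2 l)%:R * de * xlo <= Lamu k l /\
     etac * (xd l - x0 l) - lamu k - (u1 l)%:R * de * xhi <= Lamu k l /\
     - (etac * x0 l) - (1 - (u2 l)%:R) * de * xhi <= Lamu k l) /\
  (forall k l : 'I_K, (l < k)%N ->
     (u2 l)%:R * (xlo * (xhi - xlo) / etad) - (u1 l)%:R * (xhi ^+ 2 / (4 * etad))
       <= Lamu k l * xd l + lamu k * x0 l).

(* Projection of the feasible set of (P), with an additional constraint
   [extra] on (x0, xup, xdown), onto the decision variables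
   v = (x0, xup, xdown) in R^(3K) (the objective c + phi only depends on
   these and on the fixed datum y0). *)
Definition Pset (K : nat) (dt ylo yhi xlo xhi etac etad y0 gamma : R)
  (extra : ('I_K -> R) -> ('I_K -> R) -> ('I_K -> R) -> Prop)
  (v : 'rV[R]_(K + K + K)) : Prop :=
  exists x0 xu xd : 'I_K -> R,
    v = row_mx (row_mx (\row_k x0 k) (\row_k xu k)) (\row_k xd k) /\
    extra x0 xu xd /\
    exists (alpha beta laml lamu : 'I_K -> R) (Laml Lamu : 'I_K -> 'I_K -> R)
           (u1 u2 : 'I_K -> bool),
      feasP dt ylo yhi xlo xhi etac etad y0 gamma x0 xu xd alpha beta laml lamu
            Laml Lamu u1 u2.

Definition MILP_repr (n : nat) (S : 'rV[R]_n -> Prop) : Prop :=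
  exists (p q m : nat) (A : 'M[R]_(m, n)) (B : 'M[R]_(m, p)) (C : 'M[R]_(m, q))
         (b : 'cV[R]_m),
    forall v, S v <->
      exists (z : 'rV[R]_p) (w : 'rV[R]_q),
        (forall j, w 0 j = 0 \/ w 0 j = 1) /\
        forall i, (A *m v^T + B *m z^T + C *m w^T) i 0 <= b i 0.

Definition LP_repr (n : nat) (S : 'rV[R]_n -> Prop) : Prop :=
  exists (p m : nat) (A : 'M[R]_(m, n)) (B : 'M[R]_(m, p)) (b : 'cV[R]_m),
    forall v, S v <->
      exists z : 'rV[R]_p, forall i, (A *m v^T + B *m z^T) i 0 <= b i 0.

End P.

From HB Require Import structures.
From mathcomp Require Import all_boot all_order all_algebra.
From mathcomp Require Import reals boolp.
From mathcomp Require Import ring lra.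
Set Implicit Arguments. Unset Strict Implicit. Unset Printing Implicit Defensive.
Import Order.TTheory GRing.Theory Num.Theory.
Local Open Scope ring_scope.

(* Every constraint of (P) except the bilinear family (i) is an affine
   inequality in the unknowns, and finitely many affine inequalities in finitely
   many real unknowns, some of them required to lie in {0, 1}, form a
   mixed-integer linear system. It therefore suffices to get rid of (i), and in
   case (2) also of the binaries, without changing the projection of the
   feasible set onto (x0, xup, xdown).
   If xdown = 0, lowering lamu to 0 preserves (a)-(h) and makes (i) trivial.
   If x0 <= 0, or etac = etad = 1, constraint (h) for admissible binaries
   implies (h) with the binaries fixed to w1 = 0, w2 = 1, which is linear.
   Conversely, from a solution of this linear system binaries are recovered from
   the signs of x0 and x0 - xdown, and capping lamu at -xlo/etad (resp.
   xhi - xlo) restores (i), by completing a square in the second case.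
   For K = 1 the constraints (g)-(i) are void. *)

Section AffineFunctional.
Variables (R : comPzRingType) (X : finType).

Definition affine (h : (X -> R) -> R) := forall a (e1 e2 : X -> R),
  h (fun x => a * e1 x + e2 x) = a * h e1 + h e2 - a * h (fun _ => 0).

Lemma affine_cst c : affine (fun _ => c).
Proof. by move=> a e1 e2; ring. Qed.

Lemma affine_var x : affine (fun e => e x).
Proof. by move=> a e1 e2; ring. Qed.

Lemma affineD f g : affine f -> affine g -> affine (fun e => f e + g e).
Proof. by move=> hf hg a e1 e2; rewrite hf hg; ring. Qed.

Lemma affineN f : affine f -> affine (fun e => - f e).
Proof. by move=> hf a e1 e2; rewrite hf; ring. Qed.

Lemma affineMl c f : affine f -> affine (fun e => c * f e).
Proof. by move=> hf a e1 e2; rewrite hf; ring. Qed.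

Lemma affineMr c f : affine f -> affine (fun e => f e * c).
Proof. by move=> hf a e1 e2; rewrite hf; ring. Qed.

Lemma affine_sum n (P : pred 'I_n) (F : 'I_n -> (X -> R) -> R) :
  (forall i, affine (F i)) -> affine (fun e => \sum_(i < n | P i) F i e).
Proof.
move=> hF a e1 e2; under eq_bigr => i _ do rewrite hF.
by rewrite sumrB big_split /= -!mulr_sumr.
Qed.

Lemma affine_decomp h : affine h -> forall e,
  h e = h (fun _ => 0) + \sum_x e x * (h (fun y => (x == y)%:R) - h (fun _ => 0)).
Proof.
move=> hh e.
suff sum_seq (s : seq X) : h (fun y => \sum_(x <- s) e x * (x == y)%:R) - h (fun _ => 0)
    = \sum_(x <- s) e x * (h (fun y => (x == y)%:R) - h (fun _ => 0)).
  rewrite -sum_seq; have -> // : (fun y => \sum_x e x * (x == y)%:R) = e.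
    apply/funext => y; rewrite (bigD1 y) //= eqxx mulr1 big1 ?addr0 // => x /negbTE ->.
    by rewrite mulr0.
  by ring.
elim: s => [|x s IH].
  by under eq_fun => y do rewrite big_nil; rewrite big_nil subrr.
under eq_fun => y do rewrite big_cons.
by rewrite hh big_cons -IH; ring.
Qed.

End AffineFunctional.

Section Polyhedral.
Variables (R : realDomainType) (X : finType).

Definition polyhedral (Q : (X -> R) -> Prop) := exists m (h : 'I_m -> (X -> R) -> R),
  (forall i, affine (h i)) /\ forall e, Q e <-> forall i, h i e <= 0.

Lemma eq_polyhedral P Q : (forall e, P e <-> Q e) -> polyhedral P -> polyhedral Q.
Proof.
move=> PQ [m [h [ha hh]]]; exists m, h; split=> // e; rewrite -PQ; exact: hh.
Qed.

Lemma polyhedralT : polyhedral (fun _ => True).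
Proof.
by exists 0%N, (fun _ _ => 0); split=> [i|e]; [exact: affine_cst | split=> // _ []].
Qed.

Lemma polyhedral_le f g : affine f -> affine g -> polyhedral (fun e => f e <= g e).
Proof.
move=> hf hg; exists 1%N, (fun _ e => f e - g e); split=> [i|e].
  exact/affineD/affineN.
by split=> [H i|/(_ ord0)]; rewrite subr_le0.
Qed.

Lemma polyhedralI P Q :
  polyhedral P -> polyhedral Q -> polyhedral (fun e => P e /\ Q e).
Proof.
move=> [m1 [h1 [ha1 hh1]]] [m2 [h2 [ha2 hh2]]].
exists (m1 + m2)%N, (fun i => match split i with inl a => h1 a | inr b => h2 b end).
split=> [i|e]; first by case: (split i).
rewrite hh1 hh2; split=> [[H1 H2] i|H]; first by case: (split i).
split=> i.
  by have := H (lshift m2 i); rewrite (unsplitK (inl i)).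
by have := H (rshift m1 i); rewrite (unsplitK (inr i)).
Qed.

Lemma polyhedral_implyb (b : bool) Q : polyhedral Q -> polyhedral (fun e => b -> Q e).
Proof.
case: b => hQ; first by apply: eq_polyhedral hQ => e; split=> // /(_ isT).
by apply: eq_polyhedral polyhedralT => e.
Qed.

Lemma polyhedral_forall n (Q : 'I_n -> (X -> R) -> Prop) :
  (forall k, polyhedral (Q k)) -> polyhedral (fun e => forall k, Q k e).
Proof.
elim: n Q => [|n IH] Q hQ.
  by apply: eq_polyhedral polyhedralT => e; split=> // _ [].
have := polyhedralI (hQ ord0) (IH (fun k => Q (lift ord0 k)) (fun k => hQ _)).
apply: eq_polyhedral => e; split=> [[H0 HS] k|H]; last by split.
by case: (unliftP ord0 k) => [j ->|->].
Qed.

End Polyhedral.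

Ltac solve_affine := repeat first
  [ apply: affine_cst | apply: affine_var | apply: affineD | apply: affineN
  | apply: affineMl | apply: affineMr | (apply: affine_sum; move=> ?) ].

Ltac solve_polyhedral := repeat first
  [ (apply: polyhedral_forall; move=> ?) | apply: polyhedralI
  | apply: polyhedral_implyb | apply: polyhedralT
  | (apply: polyhedral_le; solve_affine) ].

Section MatrixForm.
Variables (R : realDomainType) (n : nat) (T U : finType).
Local Notation X := (('I_n + T) + U)%type.

Definition env_of (v : 'rV[R]_n) (z : 'rV[R]_#|T|) (w : 'rV[R]_#|U|) (x : X) : R :=
  match x with
  | inl (inl j) => v 0 j
  | inl (inr t) => z 0 (enum_rank t)
  | inr u => w 0 (enum_rank u)
  end.

Lemma env_ofK (e : X -> R) (v : 'rV[R]_n) : (forall j, e (inl (inl j)) = v 0 j) ->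
  e = env_of v (\row_j e (inl (inr (enum_val j)))) (\row_j e (inr (enum_val j))).
Proof. by move=> hv; apply/funext => -[[j|t]|u] /=; rewrite ?hv // mxE enum_rankK. Qed.

Lemma sum_env_of v z w (c : X -> R) :
  \sum_x env_of v z w x * c x =
    \sum_j v 0 j * c (inl (inl j)) + \sum_j z 0 j * c (inl (inr (enum_val j)))
  + \sum_j w 0 j * c (inr (enum_val j)).
Proof.
rewrite !big_sumType /=.
congr (_ + _ + _).
  rewrite (big_enum_val (fun t => z 0 (enum_rank t) * c (inl (inr t)))) /=.
  by apply: eq_bigr => j _; rewrite enum_valK.
rewrite (big_enum_val (fun t => w 0 (enum_rank t) * c (inr t))) /=.
by apply: eq_bigr => j _; rewrite enum_valK.
Qed.

Lemma polyhedral_mx Q : polyhedral Q -> exists m (A : 'M[R]_(m, n))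
  (B : 'M[R]_(m, #|T|)) (C : 'M[R]_(m, #|U|)) (b : 'cV[R]_m), forall v z w,
  Q (env_of v z w) <-> forall i, (A *m v^T + B *m z^T + C *m w^T) i 0 <= b i 0.
Proof.
move=> [m [h [ha hh]]].
pose c i (x : X) := h i (fun y => (x == y)%:R) - h i (fun _ => 0).
exists m, (\matrix_(i, j) c i (inl (inl j))),
  (\matrix_(i, j) c i (inl (inr (enum_val j)))),
  (\matrix_(i, j) c i (inr (enum_val j))), (\col_i (- h i (fun _ => 0))).
move=> v z w; rewrite hh.
have sum_mxE i p (f : 'I_m -> 'I_p -> R) (y : 'rV[R]_p) :
    \sum_j (\matrix_(i0, j0) f i0 j0) i j * y^T j 0 = \sum_j y 0 j * f i j.
  by apply: eq_bigr => j _; rewrite !mxE mulrC.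
split=> H i; move: (H i); rewrite (affine_decomp (ha i)) sum_env_of !mxE !sum_mxE; lra.
Qed.

End MatrixForm.

Section Representations.
Variables (R : realType) (n : nat) (T : finType).

Lemma milp_repr_polyhedral (U : finType) (S : 'rV[R]_n -> Prop)
    (Q : (('I_n + T) + U -> R) -> Prop) :
  polyhedral Q ->
  (forall v, S v <-> exists e, (forall j, e (inl (inl j)) = v 0 j) /\
     (forall u, e (inr u) = 0 \/ e (inr u) = 1) /\ Q e) ->
  MILP_repr S.
Proof.
move=> /polyhedral_mx [m [A [B [C [b hQ]]]]] hS.
exists #|T|, #|U|, m, A, B, C, b => v; rewrite hS; split.
  move=> [e [hv [hw he]]].
  exists (\row_j e (inl (inr (enum_val j)))), (\row_j e (inr (enum_val j))).
  by split=> [j|]; [rewrite mxE; apply: hw | apply/hQ; rewrite -env_ofK].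
move=> [z [w [hw hi]]]; exists (env_of v z w).
by split=> //; split=> [u|]; [apply: hw | apply/hQ].
Qed.

Lemma lp_repr_polyhedral (S : 'rV[R]_n -> Prop) (Q : (('I_n + T) + void -> R) -> Prop) :
  polyhedral Q ->
  (forall v, S v <-> exists e, (forall j, e (inl (inl j)) = v 0 j) /\ Q e) ->
  LP_repr S.
Proof.
move=> /polyhedral_mx [m [A [B [C [b hQ]]]]] hS.
have C0 (w : 'rV[R]_#|{: void}|) : C *m w^T = 0.
  by apply/matrixP => i j; rewrite !mxE big1 // => k; case: (enum_val k).
exists #|T|, m, A, B, b => v; rewrite hS; split.
  move=> [e [hv he]]; exists (\row_j e (inl (inr (enum_val j)))).
  move: he; rewrite {1}(env_ofK hv) => /hQ.
  by rewrite C0 addr0.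
by move=> [z hi]; exists (env_of v z 0); split=> //; apply/hQ => i; rewrite C0 addr0.
Qed.

End Representations.

Lemma bool_binary (R : nzSemiRingType) (b : bool) : (b%:R : R) = 0 \/ (b%:R : R) = 1.
Proof. by case: b; [right | left]. Qed.

Lemma binary_natr (R : nzSemiRingType) (x : R) : x = 0 \/ x = 1 -> (x == 1)%:R = x.
Proof. by case=> ->; rewrite ?eqxx // eq_sym oner_eq0. Qed.

Section ScalarConstraints.
Variables (R : realType) (xlo xhi etac etad : R).

(* Constraints (g), (h), (i) of (P) for one pair [l < k], with [x0 = x0_l],
   [xd = xd_l], [lu = lamu_k], [LU = Lamu_kl] and the binaries of [l] as reals. *)
Definition cstr_g (x0 xd w1 w2 : R) : Prop :=
  (1 - w1) * xlo <= x0 - xd /\ x0 - xd <= w1 * xhi /\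
  w2 * xlo <= x0 /\ x0 <= (1 - w2) * xhi.

Definition cstr_h (x0 xd lu LU w1 w2 : R) : Prop :=
  (xd - x0) / etad - lu + (1 - w1) * deta etac etad * xlo <= LU /\
  - (x0 / etad) + w2 * deta etac etad * xlo <= LU /\
  etac * (xd - x0) - lu - w1 * deta etac etad * xhi <= LU /\
  - (etac * x0) - (1 - w2) * deta etac etad * xhi <= LU.

Definition cstr_i (x0 xd lu LU w1 w2 : R) : Prop :=
  w2 * (xlo * (xhi - xlo) / etad) - w1 * (xhi ^+ 2 / (4 * etad))
    <= LU * xd + lu * x0.

Lemma deta_ge0 : 0 < etad -> etad <= 1 -> etac <= 1 -> 0 <= deta etac etad.
Proof.
move=> etad0 etad1 etac1; have : 1 <= etad^-1 by rewrite invf_ge1.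
rewrite /deta; lra.
Qed.

Lemma cstr_h_deta0 x0 xd lu LU w1 w2 w1' w2' : deta etac etad = 0 ->
  cstr_h x0 xd lu LU w1 w2 -> cstr_h x0 xd lu LU w1' w2'.
Proof. by rewrite /cstr_h => ->; rewrite !mulr0 !mul0r. Qed.

(* For [xd = lu = 0] the rows of (h) involving [lu] are the other two rows with
   [b2] replaced by [1 - b1], and (g) forces [x0 = 0] when [b1 = b2]. *)
Lemma cstr_h_xd0 (b1 b2 : bool) x0 lu LU :
  xlo <= 0 -> 0 <= xhi -> 0 <= deta etac etad ->
  cstr_g x0 0 b1%:R b2%:R -> cstr_h x0 0 lu LU b1%:R b2%:R ->
  cstr_h x0 0 0 LU b1%:R b2%:R.
Proof.
move=> xlo0 xhi0 de0 [g1 [g2 [g3 g4]]] [_ [h2 [_ h4]]].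
have dlo : deta etac etad * xlo <= 0 by apply: mulr_ge0_le0.
have dhi : 0 <= deta etac etad * xhi by rewrite mulr_ge0.
rewrite /cstr_h; case: b1 b2 g1 g2 g3 g4 h2 h4 => -[] /= g1 g2 g3 g4 h2 h4.
- have x00 : x0 = 0 by lra.
  by subst x0; do ?split; lra.
- by do ?split; lra.
- by do ?split; lra.
- have x00 : x0 = 0 by lra.
  by subst x0; do ?split; lra.
Qed.

Lemma cstr_i_lu0 (b1 b2 : bool) x0 LU :
  xlo <= 0 -> 0 <= xhi -> 0 < etad -> cstr_i x0 0 0 LU b1%:R b2%:R.
Proof.
move=> xlo0 xhi0 etad0.
have lo : xlo * (xhi - xlo) / etad <= 0.
  by apply: mulr_le0_ge0; [apply: mulr_le0_ge0; lra | rewrite invr_ge0 ltW].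
have hi : 0 <= xhi ^+ 2 / (4 * etad) by rewrite divr_ge0 ?sqr_ge0 ?mulr_ge0 ?ltW.
by rewrite /cstr_i mulr0 mul0r addr0; case: b1; case: b2 => /=; lra.
Qed.

Lemma cstr_h_x0_le0 (b1 b2 : bool) x0 xd lu LU :
  xlo <= 0 -> 0 <= xhi -> 0 <= deta etac etad -> x0 <= 0 -> 0 <= xd ->
  cstr_g x0 xd b1%:R b2%:R -> cstr_h x0 xd lu LU b1%:R b2%:R ->
  cstr_h x0 xd lu LU 0 1.
Proof.
move=> xlo0 xhi0 de0 x0le xdge [g1 [g2 [g3 g4]]] [h1 [h2 [h3 h4]]].
have dlo : deta etac etad * xlo <= 0 by apply: mulr_ge0_le0.
have dhi : 0 <= deta etac etad * xhi by rewrite mulr_ge0.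
rewrite /cstr_h; case: b1 b2 g1 g2 g3 g4 h1 h2 h3 h4 => -[] /= g1 g2 g3 g4 h1 h2 h3 h4.
- have x00 : x0 = 0 by lra.
  have xd0 : xd = 0 by lra.
  by subst x0 xd; do ?split; lra.
- have x00 : x0 = 0 by lra.
  have xd0 : xd = 0 by lra.
  by subst x0 xd; do ?split; lra.
- by do ?split; lra.
- have x00 : x0 = 0 by lra.
  by subst x0; do ?split; lra.
Qed.

Lemma cstr_h_lu_ge x0 xd lu LU M : xd / etad <= M -> etac * xd <= M ->
  cstr_h x0 xd lu LU 0 1 -> cstr_h x0 xd M LU 0 1.
Proof. by rewrite /cstr_h => ? ? [_ [h2 [_ h4]]]; do ?split; lra. Qed.

Lemma cstr_g_x0_le0 x0 xd : x0 <= 0 -> 0 <= xd -> xlo <= x0 - xd -> cstr_g x0 xd 0 1.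
Proof. by rewrite /cstr_g => ? ? ?; do ?split; lra. Qed.

Lemma cstr_g_sign x0 xd : xlo <= x0 - xd -> x0 <= xhi -> 0 <= xd ->
  cstr_g x0 xd (0 <= x0 - xd)%R%:R (x0 <= 0)%R%:R.
Proof.
rewrite /cstr_g => ? ? ?.
by case: (lerP 0 (x0 - xd)) => ?; case: (lerP x0 0) => ? /=; do ?split; lra.
Qed.

Lemma xd_le_cap x0 xd : 0 < etad -> etad <= 1 -> etac <= 1 -> xlo <= 0 ->
  x0 <= 0 -> 0 <= xd -> xlo <= x0 - xd ->
  xd / etad <= - xlo / etad /\ etac * xd <= - xlo / etad.
Proof.
move=> etad0 etad1 etac1 xlo0 x0le xdge xlole.
have inv1 : 1 <= etad^-1 by rewrite invf_ge1.
have f1 : (xd + xlo) * etad^-1 <= 0.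
  by apply: mulr_le0_ge0; [lra | rewrite invr_ge0 ltW].
have f2 : 0 <= (1 - etac) * xd by rewrite mulr_ge0 // subr_ge0.
have f3 : 0 <= (etad^-1 - 1) * (- xlo) by rewrite mulr_ge0 // ?subr_ge0 ?oppr_ge0.
by split; lra.
Qed.

Lemma bilinear_ge_x0_le0 x0 xd lu LU M : 0 <= LU -> 0 <= xd -> 0 <= lu -> lu <= M ->
  xlo <= x0 -> x0 <= 0 -> M * xlo <= LU * xd + lu * x0.
Proof.
move=> ? ? ? ? ? ?.
have : 0 <= LU * xd by rewrite mulr_ge0.
have : 0 <= (M - lu) * (- x0) by rewrite mulr_ge0 ?subr_ge0 ?oppr_ge0.
have : 0 <= M * (x0 - xlo) by rewrite mulr_ge0 ?subr_ge0 // (le_trans _ (_ : lu <= M)).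
lra.
Qed.

(* The only genuinely bilinear estimate: [xd (xd - x0) >= - x0^2 / 4] by
   completing the square. *)
Lemma bilinear_ge_x0_ge0 (x0 xd lu LU : R) : 0 <= x0 -> 0 <= xd -> 0 <= lu ->
  - x0 <= LU -> xd - x0 - lu <= LU ->
  - ((0 <= x0 - xd)%R%:R * (x0 ^+ 2 / 4)) <= LU * xd + lu * x0.
Proof.
move=> x0ge xdge luge h2 h1.
have sq : 0 <= (0 <= x0 - xd)%R%:R * (x0 ^+ 2 / 4).
  by rewrite mulr_ge0 ?divr_ge0 ?sqr_ge0.
case: (lerP xd lu) => [xd_le|lu_lt].
  have : 0 <= (LU + x0) * xd by rewrite mulr_ge0 // -(opprK x0) subr_ge0.
  have : 0 <= (lu - xd) * x0 by rewrite mulr_ge0 // subr_ge0.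
  lra.
have : 0 <= (LU - (xd - x0 - lu)) * xd by rewrite mulr_ge0 // subr_ge0.
case: (lerP 0 (x0 - xd)) => x0_xd /=.
  have : 0 <= lu * (x0 - xd) by rewrite mulr_ge0.
  have : 0 <= (xd - x0 / 2) ^+ 2 by rewrite sqr_ge0.
  lra.
have : 0 <= (xd - lu) * (xd - x0) by apply: mulr_ge0; lra.
lra.
Qed.

Lemma cstr_i_x0_le0 x0 xd lu LU : 0 < etad -> xlo <= 0 -> 0 <= xhi ->
  xlo <= x0 -> x0 <= 0 -> 0 <= xd -> 0 <= lu -> lu <= - xlo / etad -> 0 <= LU ->
  cstr_i x0 xd lu LU 0 1.
Proof.
move=> etad0 xlo0 xhi0 xlo_x0 x0_le0 xd_ge0 lu_ge0 lu_le LU_ge0.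
have := bilinear_ge_x0_le0 LU_ge0 xd_ge0 lu_ge0 lu_le xlo_x0 x0_le0.
have : xlo * xhi / etad <= 0.
  by apply: mulr_le0_ge0; [apply: mulr_le0_ge0 | rewrite invr_ge0 ltW].
rewrite /cstr_i; lra.
Qed.

Lemma cstr_i_sign x0 xd lu LU : etad = 1 -> xlo <= x0 - xd -> x0 <= xhi -> 0 <= xd ->
  0 <= lu -> lu <= xhi - xlo -> - x0 <= LU -> xd - x0 - lu <= LU ->
  cstr_i x0 xd lu LU (0 <= x0 - xd)%R%:R (x0 <= 0)%R%:R.
Proof.
move=> etad1 xlo_x0 x0_le xd_ge0 lu_ge0 lu_le h2 h1.
rewrite /cstr_i etad1 invr1 mulr1 mulr1.
have hi : 0 <= xhi ^+ 2 / 4 by rewrite divr_ge0 ?sqr_ge0.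
case: (lerP x0 0) => [x0le|x0gt] /=.
  have : (xhi - xlo) * xlo <= LU * xd + lu * x0.
    by apply: bilinear_ge_x0_le0 => //; lra.
  by case: (lerP 0 (x0 - xd)) => /=; lra.
have := bilinear_ge_x0_ge0 (ltW x0gt) xd_ge0 lu_ge0 h2 h1.
have : x0 ^+ 2 <= xhi ^+ 2 by rewrite ler_sqr ?nnegrE; lra.
by case: (lerP 0 (x0 - xd)) => /=; lra.
Qed.

End ScalarConstraints.

Section Problem.
Variables (R : realType) (K : nat) (dt ylo yhi xlo xhi etac etad y0 gamma : R).

Local Notation cstr_g := (cstr_g xlo xhi).
Local Notation cstr_h := (cstr_h xlo xhi etac etad).
Local Notation cstr_i := (cstr_i xlo xhi etad).
Local Notation feasP := (feasP dt ylo yhi xlo xhi etac etad y0 gamma).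
Local Notation vec := ('I_K -> R).
Local Notation mat := ('I_K -> 'I_K -> R).

Definition cstr_af (x0 xu xd al be ll lu : vec) (LL LU : mat) :=
  (forall k, 0 <= xu k /\ 0 <= xd k /\ 0 <= ll k /\ 0 <= lu k) /\
  (forall k l : 'I_K, (l <= k)%N -> 0 <= LL k l) /\
  (forall k, x0 k + xu k <= xhi /\ xlo <= x0 k - xd k) /\
  (forall k : 'I_K,
     ylo <= y0 - gamma * ll k - dt * \sum_(l < K | (l <= k)%N) (al l + LL k l)) /\
  (forall k, etac * x0 k <= al k /\ x0 k / etad <= al k /\
             etac * (x0 k + xu k) <= be k /\ (x0 k + xu k) / etad <= be k) /\
  (forall k l : 'I_K, (l <= k)%N -> 0 <= LL k l + ll k + al l - be l) /\
  (forall k : 'I_K,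
     y0 + gamma * lu k + dt * \sum_(l < K | (l <= k)%N) LU k l <= yhi) /\
  (forall k, - (etac * x0 k) <= LU k k /\
             etac * (xd k - x0 k) - lu k <= LU k k /\ 0 <= LU k k).

Definition cstr_g_all (x0 xd w1 w2 : vec) :=
  forall k : 'I_K, (k.+1 < K)%N -> cstr_g (x0 k) (xd k) (w1 k) (w2 k).

Definition cstr_h_all (x0 xd lu : vec) (LU : mat) (w1 w2 : vec) :=
  forall k l : 'I_K, (l < k)%N -> cstr_h (x0 l) (xd l) (lu k) (LU k l) (w1 l) (w2 l).

Definition cstr_i_all (x0 xd lu : vec) (LU : mat) (w1 w2 : vec) :=
  forall k l : 'I_K, (l < k)%N -> cstr_i (x0 l) (xd l) (lu k) (LU k l) (w1 l) (w2 l).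

Lemma feasPE x0 xu xd al be ll lu LL LU u1 u2 :
  feasP x0 xu xd al be ll lu LL LU u1 u2 <->
  cstr_af x0 xu xd al be ll lu LL LU /\
  cstr_g_all x0 xd (fun k => (u1 k)%:R) (fun k => (u2 k)%:R) /\
  cstr_h_all x0 xd lu LU (fun k => (u1 k)%:R) (fun k => (u2 k)%:R) /\
  cstr_i_all x0 xd lu LU (fun k => (u1 k)%:R) (fun k => (u2 k)%:R).
Proof. by rewrite /feasP /cstr_af /cstr_g_all /cstr_h_all /cstr_i_all /=; tauto. Qed.

Lemma lt_ord_succ (k l : 'I_K) : (l < k)%N -> (l.+1 < K)%N.
Proof. by move=> /leq_ltn_trans; apply. Qed.

Lemma cstr_af_lower_lu (x0 xu xd al be ll lu lu' : vec) (LL LU : mat) :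
  0 <= gamma ->
  (forall k, 0 <= lu' k <= lu k) ->
  (forall k, etac * (xd k - x0 k) - lu' k <= LU k k) ->
  cstr_af x0 xu xd al be ll lu LL LU -> cstr_af x0 xu xd al be ll lu' LL LU.
Proof.
move=> gamma0 lu'_bnd f2' [hs [hLL [ha [hb [hc [hd [he hf]]]]]]].
split; first by move=> k; have [? [? [? _]]] := hs k; have /andP[] := lu'_bnd k.
do 5 (split=> //); split.
  move=> k; have := he k; have /andP[_ le] := lu'_bnd k.
  have : gamma * lu' k <= gamma * lu k by rewrite ler_wpM2l.
  lra.
by move=> k; have [f1 [_ f3]] := hf k.
Qed.

Lemma cstr_af_cap_lu (x0 xu xd al be ll lu : vec) (LL LU : mat) M :
  0 <= gamma -> 0 <= M ->
  (forall k, etac * xd k <= M) ->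
  cstr_af x0 xu xd al be ll lu LL LU ->
  cstr_af x0 xu xd al be ll (fun k => Num.min (lu k) M) LL LU.
Proof.
move=> gamma0 M0 xd_le haf.
have lu0 k : 0 <= lu k by have [/(_ k) [_ [_ [_ ->]]]] := haf.
have [_ [_ [_ [_ [_ [_ [_ f12]]]]]]] := haf.
apply: (cstr_af_lower_lu gamma0 _ _ haf) => k.
  by rewrite le_min lu0 M0 ge_min lexx.
have [f1 [f2 _]] := f12 k.
by have := xd_le k; case: (leP (lu k) M); lra.
Qed.

Lemma cstr_h_all_cap_lu (x0 xd lu : vec) (LU : mat) M :
  (forall l, xd l / etad <= M) -> (forall l, etac * xd l <= M) ->
  cstr_h_all x0 xd lu LU (fun _ => 0) (fun _ => 1) ->
  cstr_h_all x0 xd (fun k => Num.min (lu k) M) LU (fun _ => 0) (fun _ => 1).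
Proof.
move=> xd_le1 xd_le2 hh k l lt_lk; have := hh k l lt_lk.
by case: (leP (lu k) M) => // _; apply: cstr_h_lu_ge.
Qed.

(* Indices of the auxiliary unknowns alpha, beta, laml, lamu, Laml, Lamu; the
   entries [Laml k l], [Lamu k l] with [l > k] are unconstrained. *)
Definition Aux : finType :=
  ((('I_K + 'I_K) + ('I_K + 'I_K)) + (('I_K * 'I_K) + ('I_K * 'I_K)))%type.

Section Encoding.
Variable U : finType.
Local Notation Var := (('I_(K + K + K) + Aux) + U)%type.

Section Accessors.
Variable e : Var -> R.
Definition x0_of k := e (inl (inl (lshift K (lshift K k)))).
Definition xu_of k := e (inl (inl (lshift K (rshift K k)))).
Definition xd_of k := e (inl (inl (rshift (K + K) k))).
Definition alpha_of k := e (inl (inr (inl (inl (inl k))))).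
Definition beta_of k := e (inl (inr (inl (inl (inr k))))).
Definition laml_of k := e (inl (inr (inl (inr (inl k))))).
Definition lamu_of k := e (inl (inr (inl (inr (inr k))))).
Definition Laml_of k l := e (inl (inr (inr (inl (k, l))))).
Definition Lamu_of k l := e (inl (inr (inr (inr (k, l))))).
End Accessors.

Definition pack (v : 'rV[R]_(K + K + K)) (al be ll lu : 'I_K -> R)
    (LL LU : 'I_K -> 'I_K -> R) (w : U -> R) (x : Var) : R :=
  match x with
  | inl (inl j) => v 0 j
  | inl (inr (inl (inl (inl k)))) => al k
  | inl (inr (inl (inl (inr k)))) => be k
  | inl (inr (inl (inr (inl k)))) => ll k
  | inl (inr (inl (inr (inr k)))) => lu k
  | inl (inr (inr (inl (k, l)))) => LL k l
  | inl (inr (inr (inr (k, l)))) => LU k l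
  | inr u => w u
  end.

Lemma Pset_encode extra
    (P : vec -> vec -> vec -> vec -> vec -> vec -> vec -> mat -> mat ->
         (U -> R) -> Prop) :
  (forall x0 xu xd, extra x0 xu xd /\
     (exists al be ll lu LL LU u1 u2, feasP x0 xu xd al be ll lu LL LU u1 u2) <->
     exists al be ll lu LL LU w, P x0 xu xd al be ll lu LL LU w) ->
  forall v, Pset dt ylo yhi xlo xhi etac etad y0 gamma extra v <->
    exists e : Var -> R, (forall j, e (inl (inl j)) = v 0 j) /\
      P (x0_of e) (xu_of e) (xd_of e) (alpha_of e) (beta_of e) (laml_of e)
        (lamu_of e) (Laml_of e) (Lamu_of e) (fun u => e (inr u)).
Proof.
move=> hP v; split.
  move=> [x0 [xu [xd [hv /hP [al [be [ll [lu [LL [LU [w hw]]]]]]]]]]].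
  exists (pack v al be ll lu LL LU w); split=> //.
  set e := pack v al be ll lu LL LU w.
  suff [-> -> ->] : [/\ x0_of e = x0, xu_of e = xu & xd_of e = xd] by exact: hw.
  by split; apply/funext => k;
    rewrite /e /x0_of /xu_of /xd_of /= hv ?row_mxEl ?row_mxEr mxE.
move=> [e [hv he]]; exists (x0_of e), (xu_of e), (xd_of e); split.
  rewrite -[v](hsubmxK v) -[lsubmx v](hsubmxK (lsubmx v)).
  by congr (row_mx (row_mx _ _) _); apply/rowP => k; rewrite !mxE -hv.
by apply/hP; exists (alpha_of e), (beta_of e), (laml_of e), (lamu_of e),
  (Laml_of e), (Lamu_of e), (fun u => e (inr u)).
Qed.

End Encoding.

Definition milp_system (x0 xu xd al be ll lu : vec) (LL LU : mat)
    (w : 'I_K + 'I_K -> R) :=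
  cstr_af x0 xu xd al be ll lu LL LU /\
  cstr_g_all x0 xd (fun k => w (inl k)) (fun k => w (inr k)) /\
  cstr_h_all x0 xd lu LU (fun k => w (inl k)) (fun k => w (inr k)) /\
  (forall k, xd k <= 0).

Definition lp_system (x0 xu xd al be ll lu : vec) (LL LU : mat) :=
  cstr_af x0 xu xd al be ll lu LL LU /\
  cstr_h_all x0 xd lu LU (fun _ => 0) (fun _ => 1).

Lemma polyhedral_milp_system :
  polyhedral (fun e : ('I_(K + K + K) + Aux) + ('I_K + 'I_K) -> R =>
    milp_system (x0_of e) (xu_of e) (xd_of e) (alpha_of e) (beta_of e) (laml_of e)
      (lamu_of e) (Laml_of e) (Lamu_of e) (fun u => e (inr u))).
Proof.
rewrite /milp_system /cstr_af /cstr_g_all /cstr_h_all /cstr_g /cstr_h.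
rewrite /x0_of /xu_of /xd_of /alpha_of /beta_of /laml_of /lamu_of /Laml_of /Lamu_of.
solve_polyhedral.
Qed.

Lemma polyhedral_lp_system :
  polyhedral (fun e : ('I_(K + K + K) + Aux) + void -> R =>
    lp_system (x0_of e) (xu_of e) (xd_of e) (alpha_of e) (beta_of e) (laml_of e)
      (lamu_of e) (Laml_of e) (Lamu_of e)).
Proof.
rewrite /lp_system /cstr_af /cstr_h_all /cstr_h.
rewrite /x0_of /xu_of /xd_of /alpha_of /beta_of /laml_of /lamu_of /Laml_of /Lamu_of.
solve_polyhedral.
Qed.

Lemma milp_repr_Pset extra
    (Q : vec -> vec -> vec -> vec -> vec -> vec -> vec -> mat -> mat ->
         ('I_K + 'I_K -> R) -> Prop) :
  polyhedral (fun e : ('I_(K + K + K) + Aux) + ('I_K + 'I_K) -> R =>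
    Q (x0_of e) (xu_of e) (xd_of e) (alpha_of e) (beta_of e) (laml_of e)
      (lamu_of e) (Laml_of e) (Lamu_of e) (fun u => e (inr u))) ->
  (forall x0 xu xd, extra x0 xu xd /\
     (exists al be ll lu LL LU u1 u2, feasP x0 xu xd al be ll lu LL LU u1 u2) <->
     exists al be ll lu LL LU w,
       (forall u, w u = 0 \/ w u = 1) /\ Q x0 xu xd al be ll lu LL LU w) ->
  MILP_repr (Pset dt ylo yhi xlo xhi etac etad y0 gamma extra).
Proof.
move=> hQ hP; apply: (milp_repr_polyhedral hQ).
exact: (Pset_encode (P := fun x0 xu xd al be ll lu LL LU w =>
  (forall u, w u = 0 \/ w u = 1) /\ Q x0 xu xd al be ll lu LL LU w)).
Qed.

Lemma lp_repr_Pset extra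
    (Q : vec -> vec -> vec -> vec -> vec -> vec -> vec -> mat -> mat -> Prop) :
  polyhedral (fun e : ('I_(K + K + K) + Aux) + void -> R =>
    Q (x0_of e) (xu_of e) (xd_of e) (alpha_of e) (beta_of e) (laml_of e)
      (lamu_of e) (Laml_of e) (Lamu_of e)) ->
  (forall x0 xu xd, extra x0 xu xd /\
     (exists al be ll lu LL LU u1 u2, feasP x0 xu xd al be ll lu LL LU u1 u2) <->
     exists al be ll lu LL LU, Q x0 xu xd al be ll lu LL LU) ->
  LP_repr (Pset dt ylo yhi xlo xhi etac etad y0 gamma extra).
Proof.
move=> hQ hP; apply: (lp_repr_polyhedral hQ).
apply: (Pset_encode (P := fun x0 xu xd al be ll lu LL LU _ =>
  Q x0 xu xd al be ll lu LL LU)).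
move=> x0 xu xd; rewrite hP.
split=> [[al [be [ll [lu [LL [LU hQ']]]]]]|[al [be [ll [lu [LL [LU [_ hQ']]]]]]]].
  by exists al, be, ll, lu, LL, LU, (fun _ => 0).
by exists al, be, ll, lu, LL, LU.
Qed.

Section Reformulations.
Hypotheses (hxlo : xlo <= 0) (hxhi : 0 <= xhi) (hetac0 : 0 < etac) (hetac1 : etac <= 1)
  (hetad0 : 0 < etad) (hetad1 : etad <= 1) (hgamma : 0 <= gamma).

Lemma feas_xd0_iff x0 xu xd :
  (forall k, xd k = 0) /\
    (exists al be ll lu LL LU u1 u2, feasP x0 xu xd al be ll lu LL LU u1 u2) <->
  exists al be ll lu LL LU w,
    (forall u, w u = 0 \/ w u = 1) /\ milp_system x0 xu xd al be ll lu LL LU w.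
Proof.
have de0 := deta_ge0 hetad0 hetad1 hetac1.
split.
  move=> [xd0 [al [be [ll [lu [LL [LU [u1 [u2 /feasPE [haf [hg [hh _]]]]]]]]]]]].
  exists al, be, ll, lu, LL, LU,
    (fun u => match u with inl k => (u1 k)%:R | inr k => (u2 k)%:R end).
  split; first by case=> k; apply: bool_binary.
  by split=> //; split; [exact: hg | split; [exact: hh | move=> k; rewrite xd0]].
move=> [al [be [ll [lu [LL [LU [w [w01 [haf [hg [hh xd_le0]]]]]]]]]]].
have xd0 k : xd k = 0.
  by apply/eqP; rewrite eq_le xd_le0; have [/(_ k) [_ [-> _]]] := haf.
pose u1 k := w (inl k) == 1; pose u2 k := w (inr k) == 1.
have w1E : (fun k => w (inl k)) = (fun k => (u1 k)%:R).
  by apply/funext => k; rewrite binary_natr.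
have w2E : (fun k => w (inr k)) = (fun k => (u2 k)%:R).
  by apply/funext => k; rewrite binary_natr.
rewrite w1E w2E in hg hh.
split=> //; exists al, be, ll, (fun _ => 0), LL, LU, u1, u2; apply/feasPE.
split.
  apply: (cstr_af_lower_lu hgamma _ _ haf) => k.
    by rewrite lexx; have [/(_ k) [_ [_ [_ ->]]]] := haf.
  have [_ [_ [_ [_ [_ [_ [_ /(_ k) [f1 _]]]]]]]] := haf.
  by rewrite xd0 sub0r subr0 mulrN.
split=> //; split=> k l lt_lk /=.
  have := hh k l lt_lk; have := hg l (lt_ord_succ lt_lk); rewrite /= xd0.
  exact: cstr_h_xd0.
by rewrite xd0; apply: cstr_i_lu0.
Qed.

Lemma feas_x0_le0_iff x0 xu xd :
  (forall k, x0 k <= 0) /\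
    (exists al be ll lu LL LU u1 u2, feasP x0 xu xd al be ll lu LL LU u1 u2) <->
  exists al be ll lu LL LU,
    lp_system x0 xu xd al be ll lu LL LU /\ forall k, x0 k <= 0.
Proof.
split.
  move=> [x0_le0 [al [be [ll [lu [LL [LU [u1 [u2 /feasPE [haf [hg [hh _]]]]]]]]]]]].
  exists al, be, ll, lu, LL, LU; split=> //; split=> // k l lt_lk.
  have [/(_ l) [_ [xd_ge0 _]] _] := haf.
  exact: cstr_h_x0_le0 hxlo hxhi (deta_ge0 hetad0 hetad1 hetac1) (x0_le0 l) xd_ge0
    (hg l (lt_ord_succ lt_lk)) (hh k l lt_lk).
move=> [al [be [ll [lu [LL [LU [[haf hh] x0_le0]]]]]]].
have [hs [_ [ha _]]] := haf.
have xd_ge0 l : 0 <= xd l by have [_ []] := hs l.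
have xlo_le l : xlo <= x0 l - xd l by have [] := ha l.
pose M := - xlo / etad.
have M0 : 0 <= M by apply: divr_ge0; [rewrite oppr_ge0 | exact: ltW].
have xd_le l : xd l / etad <= M /\ etac * xd l <= M.
  exact: xd_le_cap hetad0 hetad1 hetac1 hxlo (x0_le0 l) (xd_ge0 l) (xlo_le l).
have hh' := cstr_h_all_cap_lu (fun l => (xd_le l).1) (fun l => (xd_le l).2) hh.
split=> //; exists al, be, ll, (fun k => Num.min (lu k) M), LL, LU,
  (fun _ => false), (fun _ => true); apply/feasPE.
split; first exact: cstr_af_cap_lu hgamma M0 (fun l => (xd_le l).2) haf.
split; first by move=> k _; apply: cstr_g_x0_le0.
split=> // k l lt_lk; have [_ [_ [_ h4]]] := hh' k l lt_lk.
have lu_ge0 : 0 <= lu k by have [_ [_ []]] := hs k.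
apply: cstr_i_x0_le0 => //.
- by have := xlo_le l; have := xd_ge0 l; lra.
- by rewrite le_min lu_ge0.
- by rewrite ge_min lexx orbT.
- have : etac * x0 l <= 0 by rewrite pmulr_rle0.
  by move: h4; rewrite /= subrr !mul0r subr0; lra.
Qed.

Lemma feas_K1_iff x0 xu xd : K = 1%N ->
  True /\ (exists al be ll lu LL LU u1 u2, feasP x0 xu xd al be ll lu LL LU u1 u2) <->
  exists al be ll lu LL LU, lp_system x0 xu xd al be ll lu LL LU.
Proof.
move=> K1.
have no_pair (k l : 'I_K) : ~ (l < k)%N.
  by have := ltn_ord k; rewrite {2}K1 ltnS leqn0 => /eqP ->.
have no_succ (k : 'I_K) : ~ (k.+1 < K)%N by rewrite {2}K1 ltnS leqn0.
split.
  move=> [_ [al [be [ll [lu [LL [LU [u1 [u2 /feasPE [haf _]]]]]]]]]].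
  by exists al, be, ll, lu, LL, LU; split=> // k l /no_pair.
move=> [al [be [ll [lu [LL [LU [haf _]]]]]]].
split=> //; exists al, be, ll, lu, LL, LU, (fun _ => false), (fun _ => false).
by apply/feasPE; split=> //; split; [|split] => k => [/no_succ|l /no_pair|l /no_pair].
Qed.

Lemma feas_unit_eff_iff x0 xu xd : etac = 1 -> etad = 1 ->
  True /\ (exists al be ll lu LL LU u1 u2, feasP x0 xu xd al be ll lu LL LU u1 u2) <->
  exists al be ll lu LL LU, lp_system x0 xu xd al be ll lu LL LU.
Proof.
move=> etac1 etad1.
have de0 : deta etac etad = 0 by rewrite /deta etac1 etad1 invr1 subrr.
split.
  move=> [_ [al [be [ll [lu [LL [LU [u1 [u2 /feasPE [haf [_ [hh _]]]]]]]]]]]].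
  exists al, be, ll, lu, LL, LU; split=> // k l lt_lk.
  exact: cstr_h_deta0 de0 (hh k l lt_lk).
move=> [al [be [ll [lu [LL [LU [haf hh]]]]]]].
have [hs [_ [ha _]]] := haf.
have xd_ge0 l : 0 <= xd l by have [_ []] := hs l.
have xlo_le l : xlo <= x0 l - xd l by have [] := ha l.
have x0_le l : x0 l <= xhi by have [? _] := ha l; have [? _] := hs l; lra.
pose M := xhi - xlo.
have M0 : 0 <= M by rewrite /M subr_ge0 (le_trans hxlo hxhi).
have xd_le l : xd l <= M by have := xlo_le l; have := x0_le l; rewrite /M; lra.
have xd_le' l : etac * xd l <= M by rewrite etac1 mul1r.
have xd_div l : xd l / etad <= M by rewrite etad1 divr1.
have hh' := cstr_h_all_cap_lu xd_div xd_le' hh.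
split=> //; exists al, be, ll, (fun k => Num.min (lu k) M), LL, LU,
  (fun k => 0 <= x0 k - xd k), (fun k => x0 k <= 0); apply/feasPE.
split; first exact: cstr_af_cap_lu hgamma M0 xd_le' haf.
split; first by move=> k _; apply: cstr_g_sign.
split; first by move=> k l lt_lk; apply: cstr_h_deta0 de0 (hh' k l lt_lk).
move=> k l lt_lk; have [h1 [h2 _]] := hh' k l lt_lk.
have lu_ge0 : 0 <= lu k by have [_ [_ []]] := hs k.
rewrite de0 etad1 !divr1 !mulr0 !mul0r !addr0 in h1 h2.
apply: cstr_i_sign => //.
- by rewrite le_min lu_ge0.
- by rewrite ge_min lexx orbT.
Qed.

Lemma milp_repr_xd0 :
  MILP_repr (@Pset R K dt ylo yhi xlo xhi etac etad y0 gamma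
    (fun _ _ xd => forall k, xd k = 0)).
Proof. exact: milp_repr_Pset polyhedral_milp_system feas_xd0_iff. Qed.

Lemma lp_repr_x0_le0 :
  LP_repr (@Pset R K dt ylo yhi xlo xhi etac etad y0 gamma
    (fun x0 _ _ => forall k, x0 k <= 0)).
Proof.
apply: lp_repr_Pset feas_x0_le0_iff; apply: polyhedralI polyhedral_lp_system _.
by rewrite /x0_of; solve_polyhedral.
Qed.

Lemma lp_repr_K1 : K = 1%N ->
  LP_repr (@Pset R K dt ylo yhi xlo xhi etac etad y0 gamma (fun _ _ _ => True)).
Proof.
move=> K1; apply: lp_repr_Pset polyhedral_lp_system _ => x0 xu xd.
exact: feas_K1_iff.
Qed.

Lemma lp_repr_unit_eff : etac = 1 -> etad = 1 ->
  LP_repr (@Pset R K dt ylo yhi xlo xhi etac etad y0 gamma (fun _ _ _ => True)).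
Proof.
move=> etac1 etad1; apply: lp_repr_Pset polyhedral_lp_system _ => x0 xu xd.
exact: feas_unit_eff_iff.
Qed.

End Reformulations.

End Problem.

Theorem proposition8 (R : realType) (K : nat)
  (dt ylo yhi xlo xhi etac etad y0 gamma : R)
  (hK : (0 < K)%N) (hdt : 0 < dt)
  (hylo : 0 <= ylo) (hy : ylo <= yhi) (hxlo : xlo <= 0) (hxhi : 0 <= xhi)
  (hetac0 : 0 < etac) (hetac1 : etac <= 1)
  (hetad0 : 0 < etad) (hetad1 : etad <= 1)
  (hy0 : 0 <= y0) (hg0 : 0 <= gamma) (hg1 : gamma <= K%:R * dt) :
  (* (1) with x_down = 0 imposed: mixed-integer linear *)
  MILP_repr (@Pset R K dt ylo yhi xlo xhi etac etad y0 gamma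
               (fun _ _ xd => forall k, xd k = 0)) /\
  (* (2) linear program in continuous variables only *)
  LP_repr (@Pset R K dt ylo yhi xlo xhi etac etad y0 gamma
             (fun x0 _ _ => forall k, x0 k <= 0)) /\
  (K = 1%N ->
   LP_repr (@Pset R K dt ylo yhi xlo xhi etac etad y0 gamma (fun _ _ _ => True))) /\
  (etac = 1 -> etad = 1 ->
   LP_repr (@Pset R K dt ylo yhi xlo xhi etac etad y0 gamma (fun _ _ _ => True))).
Proof.
split; first exact: milp_repr_xd0.
split; first exact: lp_repr_x0_le0.
split; first exact: lp_repr_K1.
exact: lp_repr_unit_eff.
Qed.
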